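(* Let $\lambda,\mu\in P^+$ and let $X\subseteq\mathcal{B}(\lambda)$, $Y\subseteq\mathcal{B}(\mu)$ be extremal subsets. Then $X\otimes Y$ is an extremal subset of $\mathcal{B}(\lambda)\otimes\mathcal{B}(\mu)$ if and only if there is no $i\in I$ and no $x\otimes y\in X\otimes Y$ which is a broken $i$-hinge, i.e. such that $\varepsilon_i(x)>0$, $\varphi_i(x)=0$, $\varepsilon_i(y)=0$, $\varphi_i(y)>0$, and $f_i(y)\notin Y$.
   Context: $\mathfrak g$ is a complex semisimple Lie algebra with Dynkin index set $I$ and dominant weights $P^+$. For $\lambda\in P^+$, $\mathcal{B}(\lambda)$ is Kashiwara's crystal of the irreducible module of highest weight $\lambda$, with operators $e_i,f_i:\mathcal{B}(\lambda)\to\mathcal{B}(\lambda)\sqcup\{0\}$, $\varepsilon_i(b)=\max\{k:e_i^k(b)\ne0\}$, $\varphi_i(b)=\max\{k:f_i^k(b)\ne0\}$. The tensor product crystal $\mathcal{B}(\lambda)\otimes\mathcal{B}(\mu)$ has $e_i(b_1\otimes b_2)=e_i(b_1)\otimes b_2$ if $\varepsilon_i(b_2)\le\varphi_i(b_1)$, else $b_1\otimes e_i(b_2)$; $f_i(b_1\otimes b_2)=f_i(b_1)\otimes b_2$ if $\varepsilon_i(b_2)<\varphi_i(b_1)$, else $b_1\otimes f_i(b_2)$. An $i$-string is a connected component of the graph with edges $b\to f_i(b)$. A subset $X$ of a crystal $\mathcal{B}$ is extremal if $X$ is nonempty and for every $i\in I$ and every $i$-string $S$ of $\mathcal{B}$,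 $S\cap X$ is $\varnothing$, $S$, or $\{b\}$ with $b\in S$, $e_i(b)=0$. *)

From mathcomp Require Import all_boot.
Set Implicit Arguments. Unset Strict Implicit. Unset Printing Implicit Defensive.

(* Abstract (Kashiwara-style) crystals over a finite Dynkin index set I,
   given by their Kashiwara operators e_i, f_i : B -> B ⊔ {0}
   (0 is encoded by None). *)
Record crystal (I : finType) := Crystal {
  cB :> finType;
  ce : I -> cB -> option cB;
  cf : I -> cB -> option cB }.

Definition iter_opt (T : Type) (g : T -> option T) (n : nat) (b : T) : option T :=
  iter n (obind g) (Some b).

Definition crystal_axioms (I : finType) (C : crystal I) : Prop :=
  [/\ forall i (b b' : C), cf i b = Some b' <-> ce i b' = Some b,
      forall i (b : C), exists n, iter_opt (ce i) n b = None
    & forall i (b : C), exists n, iter_opt (cf i) n b = None].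

(* eps_i(b) = max{k : e_i^k b <> 0},  phi_i(b) = max{k : f_i^k b <> 0};
   under crystal_axioms these maxima are < #|B|. *)
Definition eps (I : finType) (C : crystal I) (i : I) (b : C) : nat :=
  \max_(k < #|C|.+1 | iter_opt (ce i) k b != None) k.
Definition phi (I : finType) (C : crystal I) (i : I) (b : C) : nat :=
  \max_(k < #|C|.+1 | iter_opt (cf i) k b != None) k.

Definition tensor_e (I : finType) (C1 C2 : crystal I) (i : I)
  (p : (C1 * C2)%type) : option (C1 * C2)%type :=
  let: (b1, b2) := p in
  if eps i b2 <= phi i b1
  then omap (fun x => (x, b2)) (ce i b1)
  else omap (fun y => (b1, y)) (ce i b2).

Definition tensor_f (I : finType) (C1 C2 : crystal I) (i : I)
  (p : (C1 * C2)%type) : option (C1 * C2)%type :=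
  let: (b1, b2) := p in
  if eps i b2 < phi i b1
  then omap (fun x => (x, b2)) (cf i b1)
  else omap (fun y => (b1, y)) (cf i b2).

Definition tensor (I : finType) (C1 C2 : crystal I) : crystal I :=
  @Crystal I (C1 * C2)%type (tensor_e (C1:=C1) (C2:=C2)) (tensor_f (C1:=C1) (C2:=C2)).

Definition istring_rel (I : finType) (C : crystal I) (i : I) : rel C :=
  fun x y => (cf i x == Some y) || (cf i y == Some x).

Definition istring (I : finType) (C : crystal I) (i : I) (b0 : C) : {set C} :=
  [set b | connect (@istring_rel I C i) b0 b].

Definition extremal (I : finType) (C : crystal I) (X : {set C}) : Prop :=
  X != set0 /\
  forall (i : I) (b0 : C),
    let S := istring i b0 in
    [\/ S :&: X = set0, S \subset X
      | exists2 b, S :&: X = [set b] & ce i b = None].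

Definition broken_hinge (I : finType) (C1 C2 : crystal I) (Y : {set C2})
  (i : I) (x : C1) (y : C2) : Prop :=
  [/\ 0 < eps i x, phi i x = 0, eps i y = 0, 0 < phi i y
    & ~~ oapp (fun y' => y' \in Y) false (cf i y)].

From mathcomp Require Import all_boot.
Set Implicit Arguments. Unset Strict Implicit. Unset Printing Implicit Defensive.

(* Since e_i and f_i are mutually inverse and nilpotent, every i-string is a
   chain t -> f_i t -> ... -> f_i^n t with e_i t = 0.  Hence Z is extremal iff,
   for each i and each edge b -> f_i b, f_i b in Z implies b in Z, and
   b in Z with f_i b notin Z implies e_i b = 0: the first condition makes Z meet
   each string in an initial segment, the second forces that segment to be
   empty, a single head, or everything.  The tensor product is again such a
   crystal, and the tensor rule transports both conditions from X and Y to
   X (x) Y, with the single exception of an edge x (x) y -> x (x) f_i y leaving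
   X (x) Y while e_i acts on x, which is exactly a broken i-hinge. *)

Section PartialIteration.
Variable T : eqType.
Implicit Types g h : T -> option T.

Lemma iter_obind_None g n : iter n (obind g) None = None.
Proof. by elim: n => //= n ->. Qed.

Lemma iter_optD g m n b :
  iter_opt g (m + n) b = obind (iter_opt g m) (iter_opt g n b).
Proof.
rewrite /iter_opt iterD; case: (iter n (obind g) (Some b)) => //=.
exact: iter_obind_None.
Qed.

Lemma iter_optS g n b : iter_opt g n.+1 b = obind g (iter_opt g n b).
Proof. by []. Qed.

Lemma iter_optSr g n b : iter_opt g n.+1 b = obind (iter_opt g n) (g b).
Proof. by rewrite -addn1 iter_optD. Qed.

Lemma iter_opt_le g m n b :
  m <= n -> iter_opt g n b != None -> iter_opt g m b != None.
Proof. by move=> le_mn; rewrite -(subnK le_mn) iter_optD; case: iter_opt. Qed.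

Lemma iter_opt_cycle g d c :
  iter_opt g d c = Some c -> forall m, iter_opt g (m * d) c = Some c.
Proof. by move=> cyc; elim=> // m IHm; rewrite mulSn iter_optD IHm. Qed.

Lemma iter_opt_inv g h : (forall b b', g b = Some b' -> h b' = Some b) ->
  forall n b c, iter_opt g n b = Some c -> iter_opt h n c = Some b.
Proof.
move=> ghK; elim=> [|n IHn] b c; first by case=> ->.
rewrite iter_optSr iter_optS; case gb: (g b) => [b'|] //= /IHn ->.
exact: ghK.
Qed.

Lemma iter_opt_measure g (m : T -> nat) :
  (forall b b', g b = Some b' -> m b' < m b) -> forall b, iter_opt g (m b).+1 b = None.
Proof.
move=> g_dec b; suff: forall n b, m b < n -> iter_opt g n b = None by apply.
elim=> // n IHn {}b lt_bn; rewrite iter_optSr; case gb: (g b) => [b'|] //=.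
by apply: IHn; apply: leq_trans (g_dec _ _ gb) _.
Qed.

End PartialIteration.

Section NilpotentIteration.
Variables (T : finType) (g : T -> option T).
Hypothesis g_nilpotent : forall b, exists n, iter_opt g n b = None.

Lemma iter_opt_inj b m n c :
  iter_opt g m b = Some c -> iter_opt g n b = Some c -> m = n.
Proof.
wlog le_mn : m n / m <= n.
  move=> W gm gn; case: (leqP m n) => le; first exact: W.
  by apply/esym/W => //; exact: ltnW.
move=> gm gn; case: ltngtP le_mn => // lt_mn _.
have cyc : iter_opt g (n - m) c = Some c.
  by have := iter_optD g (n - m) m b; rewrite (subnK (ltnW lt_mn)) gm gn.
have [k gk] := g_nilpotent c.
have pos : 0 < n - m by rewrite subn_gt0.
have := iter_opt_le (g := g) (b := c) (leq_pmulr k pos).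
by rewrite iter_opt_cycle // gk => /(_ isT).
Qed.

Lemma iter_opt_lt_card b k : iter_opt g k b != None -> k < #|T|.
Proof.
move=> gk; pose h (j : 'I_k.+1) := odflt b (iter_opt g j b).
have hE (j : 'I_k.+1) : iter_opt g j b = Some (h j).
  have := iter_opt_le (ltnSE (ltn_ord j)) gk.
  by rewrite /h; case: iter_opt.
have h_inj : injective h.
  by move=> j1 j2 hj; apply/val_inj/(iter_opt_inj (hE j1)); rewrite hj hE.
by have := leq_card h h_inj; rewrite card_ord.
Qed.

(* [eps i] and [phi i] are convertible to [max_iter (ce i)] and [max_iter (cf i)]. *)
Definition max_iter (b : T) : nat :=
  \max_(k < #|T|.+1 | iter_opt g k b != None) k.

Lemma leq_max_iter b k : (k <= max_iter b) = (iter_opt g k b != None).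
Proof.
apply/idP/idP => [le_k|gk].
  apply: iter_opt_le le_k _; rewrite /max_iter.
  by apply: (big_ind (fun v => iter_opt g v b != None)) => // u v; case: leqP.
have lt_k : k < #|T|.+1 := ltnW (iter_opt_lt_card gk).
exact: (@leq_bigmax_cond _ _ _ (Ordinal lt_k)).
Qed.

Lemma max_iter_Some b b' : g b = Some b' -> max_iter b = (max_iter b').+1.
Proof.
move=> gb; have le_iff k : (k <= max_iter b) = (k <= (max_iter b').+1).
  by case: k => // k; rewrite ltnS !leq_max_iter iter_optSr gb.
by apply/eqP; rewrite eqn_leq le_iff leqnn -le_iff leqnn.
Qed.

End NilpotentIteration.

Definition locally_extremal (I : finType) (C : crystal I) (i : I) (Z : {set C}) : Prop :=
  forall b b', cf i b = Some b' ->
    (b' \in Z -> b \in Z) /\ (b \in Z -> b' \notin Z -> ce i b = None).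

Section Crystal.
Variables (I : finType) (C : crystal I).
Hypothesis HC : crystal_axioms C.
Implicit Types (i : I) (b : C) (Z : {set C}).

Lemma cf_ce i b b' : cf i b = Some b' -> ce i b' = Some b.
Proof. by case: HC => inv _ _ /inv. Qed.

Lemma ce_cf i b b' : ce i b = Some b' -> cf i b' = Some b.
Proof. by case: HC => inv _ _ /inv. Qed.

Lemma cf_inj i b1 b2 c : cf i b1 = Some c -> cf i b2 = Some c -> b1 = b2.
Proof. by move=> /cf_ce e1 /cf_ce; rewrite e1 => -[]. Qed.

Lemma eps_gt0 i b : (0 < eps i b) = (ce i b != None).
Proof. by case: HC => _ nil _; exact: (leq_max_iter (nil i) b 1). Qed.

Lemma phi_gt0 i b : (0 < phi i b) = (cf i b != None).
Proof. by case: HC => _ _ nil; exact: (leq_max_iter (nil i) b 1). Qed.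

Lemma eps_ce i b b' : ce i b = Some b' -> eps i b = (eps i b').+1.
Proof. by case: HC => _ nil _; exact: max_iter_Some. Qed.

Lemma phi_cf i b b' : cf i b = Some b' -> phi i b = (phi i b').+1.
Proof. by case: HC => _ _ nil; exact: max_iter_Some. Qed.

Lemma exists_istring_head i b :
  exists2 t, ce i t = None & iter_opt (cf i) (eps i b) t = Some b.
Proof.
case: HC => _ nil _; have := leq_max_iter (nil i) b (eps i b).
rewrite leqnn; case et: (iter_opt (ce i) (eps i b) b) => [t|] // _.
exists t; last exact: iter_opt_inv (@ce_cf i) _ _ _ et.
have := leq_max_iter (nil i) b (eps i b).+1.
by rewrite ltnn iter_optS et /=; case: (ce i t).
Qed.

Lemma istring_iter_head i t k0 b0 c :
  ce i t = None -> iter_opt (cf i) k0 t = Some b0 ->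
  c \in istring i b0 -> exists k, iter_opt (cf i) k t = Some c.
Proof.
move=> et + /[!inE] /connectP [p]; elim: p b0 k0 => [|b1 p IHp] b0 k0 tb0 /=.
  by move=> _ ->; exists k0.
case/andP=> /orP[/eqP fb0 | /eqP fb1]; first by apply: (IHp _ k0.+1); rewrite iter_optS tb0.
case: k0 tb0 => [[e_t]|k0]; first by move: (cf_ce fb1); rewrite -e_t et.
rewrite iter_optS; case ek: iter_opt => [b'|] //= fb'.
by apply: (IHp _ k0); rewrite ek (cf_inj fb' fb1).
Qed.

Lemma locally_extremal_of_extremal Z : extremal Z -> forall i, locally_extremal i Z.
Proof.
case=> _ extZ i b b' fb.
have bS : b \in istring i b by rewrite inE connect0.
have b'S : b' \in istring i b by rewrite inE connect1 // /istring_rel fb eqxx.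
have [SZ0|/subsetP SZ|[c SZc ec]] := extZ i b.
- have notinZ x : x \in istring i b -> x \notin Z.
    by move=> xS; apply/negP => xZ; have := in_set0 x; rewrite -SZ0 inE xS xZ.
  by rewrite (negbTE (notinZ _ bS)) (negbTE (notinZ _ b'S)).
- by rewrite SZ ?SZ.
- have inZ x : x \in istring i b -> (x \in Z) = (x == c).
    by move=> xS; rewrite -in_set1 -SZc inE xS.
  rewrite (inZ _ bS) (inZ _ b'S); split=> [/eqP eb'|/eqP -> //].
  by move: ec; rewrite -eb' (cf_ce fb).
Qed.

Section IString.
Variables (i : I) (Z : {set C}).
Hypothesis locZ : locally_extremal i Z.

Lemma mem_iter_cf k b c : iter_opt (cf i) k b = Some c -> c \in Z -> b \in Z.
Proof.
elim: k c => [|k IHk] c; first by case=> ->.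
rewrite iter_optS; case ek: iter_opt => [d|] //= fd cZ.
exact: IHk ek ((locZ fd).1 cZ).
Qed.

(* Z can only be left at the head of a string: an exit point c = f_i^k b
   with k > 0 would have e_i c <> 0. *)
Lemma cf_notin_of_iter k b d : b \in Z -> iter_opt (cf i) k b = Some d ->
  d \notin Z -> exists2 b1, cf i b = Some b1 & b1 \notin Z.
Proof.
move=> bZ; elim: k d => [|k IHk] d; first by case=> <-; rewrite bZ.
rewrite iter_optS; case ek: iter_opt => [c|] //= fc dZ.
have [cZ|] := boolP (c \in Z); last exact: IHk.
have ec := (locZ fc).2 cZ dZ.
case: k {IHk} ek fc => [[<-] fb|k]; first by exists d.
by rewrite iter_optS; case: iter_opt => [c'|] //= /cf_ce; rewrite ec.
Qed.

Lemma extremal_istring b0 : let S := istring i b0 in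
  [\/ S :&: Z = set0, S \subset Z | exists2 b, S :&: Z = [set b] & ce i b = None].
Proof.
move=> S; have [t et tb0] := exists_istring_head i b0.
have inS c : c \in S -> exists k, iter_opt (cf i) k t = Some c.
  exact: istring_iter_head et tb0.
have [|/subsetPn [d dS dZ]] := boolP (S \subset Z); first by constructor 2.
have [|[c]] := set_0Vmem (S :&: Z); first by constructor 1.
rewrite inE => /andP [cS cZ].
have tZ : t \in Z by have [k tc] := inS c cS; exact: mem_iter_cf tc cZ.
have [t1 ft t1Z] : exists2 t1, cf i t = Some t1 & t1 \notin Z.
  by have [k td] := inS d dS; exact: cf_notin_of_iter tZ td dZ.
have onlyt c' : c' \in S -> c' \in Z -> c' = t.
  move=> /inS [[[->] //|k tc']] c'Z; move: t1Z.
  by rewrite (@mem_iter_cf k _ c') // -tc' iter_optSr ft.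
constructor 3; exists t => //; apply/setP => z.
rewrite in_setI in_set1; apply/andP/eqP => [[zS zZ]|->]; first exact: onlyt.
by rewrite -(onlyt c cS cZ) cS cZ.
Qed.

End IString.

Lemma extremalP Z : extremal Z <-> Z != set0 /\ forall i, locally_extremal i Z.
Proof.
split=> [extZ|[Z0 locZ]]; first by split; [case: extZ | exact: locally_extremal_of_extremal].
by split=> // i b0; exact: extremal_istring.
Qed.

End Crystal.

Section Tensor.
Variables (I : finType) (C1 C2 : crystal I).
Hypotheses (HC1 : crystal_axioms C1) (HC2 : crystal_axioms C2).
Local Notation T := (tensor C1 C2).

Lemma tensor_ce_decr i (p p' : T) :
  ce i p = Some p' -> eps i p'.1 + eps i p'.2 < eps i p.1 + eps i p.2.
Proof.
case: p p' => [x y] [x' y']; rewrite /= /tensor_e; case: ifP => _.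
  by case ex: (ce i x) => [z|] //= [<- <-]; rewrite (eps_ce HC1 ex) addSn.
by case ey: (ce i y) => [z|] //= [<- <-]; rewrite (eps_ce HC2 ey) addnS.
Qed.

Lemma tensor_cf_decr i (p p' : T) :
  cf i p = Some p' -> phi i p'.1 + phi i p'.2 < phi i p.1 + phi i p.2.
Proof.
case: p p' => [x y] [x' y']; rewrite /= /tensor_f; case: ifP => _.
  by case fx: (cf i x) => [z|] //= [<- <-]; rewrite (phi_cf HC1 fx) addSn.
by case fy: (cf i y) => [z|] //= [<- <-]; rewrite (phi_cf HC2 fy) addnS.
Qed.

Lemma tensor_cf_ce i (p p' : T) : cf i p = Some p' -> ce i p' = Some p.
Proof.
case: p p' => [x y] [x' y']; rewrite /= /tensor_f /tensor_e.
case: (ltnP (eps i y) (phi i x)) => [lt_yx|le_xy].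
  case fx: (cf i x) => [z|] //= [<- <-].
  by move: lt_yx; rewrite (phi_cf HC1 fx) ltnS => ->; rewrite (cf_ce HC1 fx).
case fy: (cf i y) => [z|] //= [<- <-].
by rewrite (eps_ce HC2 (cf_ce HC2 fy)) ltnNge le_xy (cf_ce HC2 fy).
Qed.

Lemma tensor_ce_cf i (p p' : T) : ce i p = Some p' -> cf i p' = Some p.
Proof.
case: p p' => [x y] [x' y']; rewrite /= /tensor_f /tensor_e.
case: (leqP (eps i y) (phi i x)) => [le_yx|lt_xy].
  case ex: (ce i x) => [z|] //= [<- <-].
  by rewrite (phi_cf HC1 (ce_cf HC1 ex)) ltnS le_yx (ce_cf HC1 ex).
case ey: (ce i y) => [z|] //= [<- <-].
rewrite (eps_ce HC2 ey) ltnS in lt_xy.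
by rewrite ltnNge lt_xy (ce_cf HC2 ey).
Qed.

Lemma tensor_crystal_axioms : crystal_axioms T.
Proof.
split=> [i p p'|i p|i p]; first by split; [exact: tensor_cf_ce | exact: tensor_ce_cf].
- exists (eps i p.1 + eps i p.2).+1.
  exact: (iter_opt_measure (m := fun q : T => eps i q.1 + eps i q.2) (@tensor_ce_decr i)).
- exists (phi i p.1 + phi i p.2).+1.
  exact: (iter_opt_measure (m := fun q : T => phi i q.1 + phi i q.2) (@tensor_cf_decr i)).
Qed.

Variables (X : {set C1}) (Y : {set C2}).

Lemma broken_hinge_not_locally_extremal i x y :
  x \in X -> y \in Y -> broken_hinge Y i x y ->
  ~ locally_extremal (C := T) i (setX X Y).
Proof.
move=> xX yY [ex px ey py fyY] locXY.
case ex': (ce i x) => [x'|]; last by rewrite (eps_gt0 HC1) ex' in ex.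
case fy: (cf i y) => [y'|]; last by rewrite (phi_gt0 HC2) fy in py.
have fxy : cf (c := T) i (x, y) = Some (x, y') by rewrite /= /tensor_f ey px ltnn fy.
have exy : ce (c := T) i (x, y) = Some (x', y) by rewrite /= /tensor_e ey px ex'.
rewrite fy /= in fyY; have := (locXY _ _ fxy).2.
by rewrite !in_setX xX yY exy => /(_ isT fyY).
Qed.

Lemma locally_extremal_tensor i :
  locally_extremal i X -> locally_extremal i Y ->
  (forall x y, x \in X -> y \in Y -> ~ broken_hinge Y i x y) ->
  locally_extremal (C := T) i (setX X Y).
Proof.
move=> locX locY no_hinge [x y] [x' y']; rewrite /= /tensor_f /tensor_e.
case: (ltnP (eps i y) (phi i x)) => [lt_yx|le_xy].
  case fx: (cf i x) => [z|] //= [<- <-]; have [L1 L2] := locX _ _ fx.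
  rewrite !in_setX; split=> [/andP[/L1 -> ->] // | /andP[xX ->]].
  by rewrite andbT ltnW // => /(L2 xX) ->.
case fy: (cf i y) => [z|] //= [<- <-]; have [L1 L2] := locY _ _ fy.
rewrite !in_setX; split=> [/andP[-> /L1 ->] // | /andP[xX yY]]; rewrite xX /= => zY.
have ey0 : eps i y = 0 by apply/eqP; rewrite -leqn0 leqNgt (eps_gt0 HC2) (L2 yY zY).
move: le_xy; rewrite ey0 leqn0 => /eqP px; rewrite px leqnn.
case ex: (ce i x) => [x''|] //=; case: (no_hinge x y xX yY).
by split; rewrite ?(eps_gt0 HC1) ?(phi_gt0 HC2) ?ex ?fy.
Qed.

End Tensor.

Theorem theorem7p3 (I : finType) (C1 C2 : crystal I)
  (HC1 : crystal_axioms C1) (HC2 : crystal_axioms C2)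
  (X : {set C1}) (Y : {set C2}) :
  extremal X -> extremal Y ->
  (extremal (C := tensor C1 C2) (setX X Y) <->
   ~ exists (i : I) (x : C1) (y : C2),
       [/\ x \in X, y \in Y & broken_hinge Y i x y]).
Proof.
move=> /(extremalP HC1) [/set0Pn [x0 x0X] locX] /(extremalP HC2) [/set0Pn [y0 y0Y] locY].
apply: iff_trans (extremalP (tensor_crystal_axioms HC1 HC2) _) _.
split=> [[_ locXY] [i [x [y [xX yY hinge]]]] | no_hinge].
  exact: broken_hinge_not_locally_extremal xX yY hinge (locXY i).
split; first by apply/set0Pn; exists (x0, y0); rewrite in_setX x0X y0Y.
move=> i; apply: locally_extremal_tensor => // x y xX yY hinge.
by apply: no_hinge; exists i, x, y.
Qed.
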